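(* Let $G$ be a cograph whose edge connectivity is exactly $k$, and let $X$ be the set of vertices of degree $k$ in $G$. Then every set $E_{ca}\subseteq E(\overline{G})$ such that $G\cup E_{ca}$ is $(k+1)$-edge connected satisfies $|E_{ca}|\geq\rho(\overline{G}[X])$.
   Context: A cograph is a graph that can be built from single vertices by repeatedly taking disjoint unions and joins; equivalently a graph with no induced path on four vertices. $\overline{G}$ is the complement of $G$, $\overline{G}[X]$ the subgraph of $\overline{G}$ induced by $X$, and $G\cup F=(V(G),E(G)\cup F)$. The edge connectivity of a connected graph is the least size of a set of edges whose removal disconnects it; a graph is $k$-edge connected if its edge connectivity is $k$. An edge cover of a graph is a set of edges such that every vertex is incident to at least one of them. For a graph $H$: if $H$ is connected with at least two vertices, $\rho(H)$ is the minimum cardinality of an edge cover of $H$; for a trivial (one-vertex) component $H_i$, $\rho(H_i)=1$; if $H$ has components $H_1,\ldots,H_r$, $\rho(H)=\sum_i\rho(H_i)$. *)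

From mathcomp Require Import all_boot.
Set Implicit Arguments. Unset Strict Implicit. Unset Printing Implicit Defensive.

(* A finite simple graph on the vertex type T is given by its edge set
   E : {set {set T}}, each edge being a 2-element subset of T. *)
Section Graphs.
Variable T : finType.

Definition is_graph (E : {set {set T}}) : Prop :=
  forall e, e \in E -> #|e| = 2.

Definition adj (E : {set {set T}}) : rel T :=
  fun u v => (u != v) && ([set u; v] \in E).

Definition deg (E : {set {set T}}) (v : T) : nat := #|[set u | adj E v u]|.

Definition connectedg (E : {set {set T}}) : Prop :=
  forall u v : T, connect (adj E) u v.

Definition edge_connectivity (E : {set {set T}}) (k : nat) : Prop :=
  [/\ connectedg E,
      exists F : {set {set T}}, [/\ F \subset E, #|F| = k & ~ connectedg (E :\: F)]
    & forall F : {set {set T}}, F \subset E -> ~ connectedg (E :\: F) -> k <= #|F|].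

Definition cograph (E : {set {set T}}) : Prop :=
  forall a b c d : T, uniq [:: a; b; c; d] ->
    ~ [/\ adj E a b, adj E b c, adj E c d &
          [/\ ~~ adj E a c, ~~ adj E b d & ~~ adj E a d]].

Definition compl_edges (E : {set {set T}}) : {set {set T}} :=
  [set e : {set T} | (#|e| == 2) && (e \notin E)].

Definition induced_edges (E : {set {set T}}) (X : {set T}) : {set {set T}} :=
  [set e in E | e \subset X].

Definition min_edge_cover (Ed : {set {set T}}) (C : {set T}) : nat :=
  \big[minn/#|Ed|]_(F in powerset Ed | [forall v in C, exists e in F, v \in e]) #|F|.

(* connected components of the graph with vertex set X and edge set H
   (H is assumed to only contain edges inside X) *)
Definition components (X : {set T}) (H : {set {set T}}) : {set {set T}} :=
  [set [set v | connect (adj H) u v] | u in X].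

Definition rho (X : {set T}) (H : {set {set T}}) : nat :=
  \sum_(C in components X H)
     (if #|C| == 1 then 1 else min_edge_cover (induced_edges H C) C).

End Graphs.

From mathcomp Require Import all_boot order zify.

Set Implicit Arguments.
Unset Strict Implicit.
Unset Printing Implicit Defensive.

(* A vertex of degree k in G that no added edge touches would be separated from
   the rest of G ∪ Eca by its k incident edges, so Eca covers the set X of
   degree-k vertices.  An added edge with both ends in X is an edge of the
   complement induced on X, hence meets at most one component of that graph.
   The added edges meeting a nontrivial component C can each be traded for an
   edge of the complement induced on C through the same vertices of C, which
   yields an edge cover of C; summing over the components gives the bound. *)

Lemma sum_card_le_disjoint (I J : finType) (P : {set I}) (A : I -> {set J})
    (B : {set J}) :
  {in P, forall i, A i \subset B} ->
  {in P &, forall i j, ~~ [disjoint A i & A j] -> i = j} ->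
  \sum_(i in P) #|A i| <= #|B|.
Proof.
move=> subAB disjA; pose A' i := if i \in P then A i else set0.
have disjA' i j : i != j -> [disjoint A' i & A' j].
  rewrite /A'; case: ifP => iP; last by rewrite -setI_eq0 set0I.
  case: ifP => jP; last by rewrite -setI_eq0 setI0.
  by apply: contraNT => /disjA ->.
have -> : \sum_(i in P) #|A i| = #|\bigcup_i A' i|.
  rewrite -sum1_card partition_disjoint_bigcup // big_mkcond /=.
  by apply: eq_bigr => i _; rewrite /A' sum1_card; case: ifP; rewrite ?cards0.
apply/subset_leq_card/bigcupsP => i _; rewrite /A'.
by case: ifP => [/subAB // | _]; apply: sub0set.
Qed.

Lemma set2_of_card2 (T : finType) (e : {set T}) x y :
  #|e| = 2 -> x \in e -> y \in e -> x != y -> e = [set x; y].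
Proof.
move=> e2 xe ye xy; apply/eqP; rewrite eq_sym eqEcard subUset !sub1set xe ye.
by rewrite cards2 xy e2.
Qed.

Section Graphs.
Variable T : finType.
Implicit Types (E D F Ed H : {set {set T}}) (C X : {set T}) (e : {set T}).

Definition edges_at E (v : T) := [set e in E | v \in e].

Definition covers F C := [forall v in C, exists e in F, v \in e].

Definition incident D C := [set e in D | ~~ [disjoint e & C]].

Lemma coversP F C :
  reflect (forall v, v \in C -> exists2 e, e \in F & v \in e) (covers F C).
Proof.
apply: (iffP forall_inP) => covF v /covF; first by case/exists_inP => e; exists e.
by case=> e eF ve; apply/exists_inP; exists e.
Qed.
Arguments coversP {F C}.

Lemma coversS F C C' : C' \subset C -> covers F C -> covers F C'.
Proof. by move=> /subsetP sC /coversP covF; apply/coversP => v /sC /covF. Qed.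

Lemma incidentP D C e x : e \in D -> x \in e -> x \in C -> e \in incident D C.
Proof.
move=> eD xe xC; rewrite inE eD -setI_eq0 /=.
by apply/set0Pn; exists x; rewrite inE xe xC.
Qed.

Lemma adj_sym E : symmetric (adj E).
Proof. by move=> u v; rewrite /adj eq_sym setUC. Qed.

Lemma not_connectedg_nontrivial E (v : T) : ~ connectedg E -> exists u, u != v.
Proof.
move=> discE; case: (pickP (predC1 v)) => [u uv | all_v]; first by exists u.
case: discE => a b; move: (all_v a) (all_v b) => /= /negbFE/eqP-> /negbFE/eqP->.
exact: connect0.
Qed.

Lemma edges_at_disconnects E (v : T) :
  (exists u, u != v) -> ~ connectedg (E :\: edges_at E v).
Proof.
case=> u uv /(_ v u) /connectP[[|z p] /=].
  by move=> _ uv_eq; rewrite uv_eq eqxx in uv.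
by rewrite /adj !inE eqxx andbT andNb andbF.
Qed.

Lemma card_edges_at_le_deg E (v : T) : is_graph E -> #|edges_at E v| <= deg E v.
Proof.
move=> gE; apply: leq_trans (leq_imset_card (fun u => [set v; u]) _).
apply/subset_leq_card/subsetP => e; rewrite inE => /andP[eE ve].
have [u] : exists u, u \in e :\ v.
  by apply/card_gt0P; have := cardsD1 v e; rewrite ve (gE e eE) add1n => -[<-].
rewrite in_setD1 eq_sym => /andP[vu ue].
have e_vu := set2_of_card2 (gE e eE) ve ue vu.
by rewrite e_vu; apply: imset_f; rewrite inE /adj vu -e_vu.
Qed.

Lemma edge_connectivity_le_edges_at E k (v : T) :
  edge_connectivity E k -> k <= #|edges_at E v|.
Proof.
case=> _ [F [_ _ /not_connectedg_nontrivial nontriv]] min_cut.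
apply: min_cut; first by apply/subsetP => e; rewrite inE => /andP[].
exact: edges_at_disconnects.
Qed.

Lemma edges_atU E D (v : T) : edges_at (E :|: D) v = edges_at E v :|: edges_at D v.
Proof. by apply/setP => e; rewrite !inE andb_orl. Qed.

Lemma augmenting_edge_at_low_degree E D k (v : T) :
  is_graph E -> edge_connectivity (E :|: D) k.+1 -> deg E v <= k ->
  exists2 e, e \in D & v \in e.
Proof.
move=> gE connED degv.
have cut := edge_connectivity_le_edges_at v connED; rewrite edges_atU cardsU in cut.
have low := card_edges_at_le_deg v gE.
have [D0 | /card_gt0P[e]] := posnP #|edges_at D v|; first by lia.
by rewrite inE => /andP[eD ve]; exists e.
Qed.

Lemma min_edge_cover_le_card Ed C F :
  F \subset Ed -> covers F C -> min_edge_cover Ed C <= #|F|.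
Proof.
move=> sFEd covF; apply: (@Order.TotalTheory.bigmin_le_cond _ nat).
by rewrite powersetE sFEd.
Qed.

Lemma edge_through_trace Ed C e (x : T) :
  covers Ed C -> #|e| = 2 -> (e \subset C -> e \in Ed) -> x \in e -> x \in C ->
  exists2 f, f \in Ed & C :&: e \subset f.
Proof.
move=> covEd e2 eEd xe xC.
have [eC | eNC] := boolP (e \subset C); first by exists e; [exact: eEd | exact: subsetIr].
have [f fEd xf] := coversP covEd x xC; exists f => //.
apply/subsetP => y; rewrite inE => /andP[yC ye].
have [<- // | xy] := eqVneq x y.
by move: eNC; rewrite (set2_of_card2 e2 xe ye xy) subUset !sub1set xC yC.
Qed.

Lemma min_edge_cover_le_incident Ed C D :
  covers Ed C -> (forall e, e \in D -> #|e| = 2) ->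
  (forall e, e \in D -> e \subset C -> e \in Ed) -> covers D C ->
  min_edge_cover Ed C <= #|incident D C|.
Proof.
move=> covEd D_pair D_inside covD.
pose g e := odflt e [pick f in Ed | C :&: e \subset f].
have gP e : e \in incident D C -> g e \in Ed /\ C :&: e \subset g e.
  rewrite inE => /andP[eD]; rewrite -setI_eq0 => /set0Pn[x]; rewrite inE => /andP[xe xC].
  rewrite /g; case: pickP => [f /andP[] // | none].
  have [f fEd sf] := edge_through_trace covEd (D_pair e eD) (D_inside e eD) xe xC.
  by move: (none f); rewrite /= fEd sf.
apply: leq_trans (leq_imset_card g _); apply: min_edge_cover_le_card.
  by apply/subsetP => _ /imsetP[e /gP[gEd _] ->].
apply/coversP => v vC; have [e eD ve] := coversP covD v vC.
have eI := incidentP eD ve vC.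
exists (g e); first exact: imset_f.
by case: (gP e eI) => _ /subsetP; apply; rewrite inE vC ve.
Qed.

Section Components.
Variables (X : {set T}) (H : {set {set T}}).

Lemma componentE C (x : T) :
  C \in components X H -> x \in C -> C = [set y | connect (adj H) x y].
Proof.
case/imsetP => u _ ->; rewrite inE => ux; apply/setP => y; rewrite !inE.
exact: (same_connect (sym_connect_sym (adj_sym H)) ux y).
Qed.

Lemma component_covered C :
  C \in components X H -> #|C| != 1 -> covers (induced_edges H C) C.
Proof.
move=> CH C1; apply/coversP => x xC.
have [w] : exists w, w \in C :\ x.
  by apply/card_gt0P; move: C1; rewrite (cardsD1 x) xC add1n lt0n; apply: contraNneq => ->.
rewrite in_setD1 (componentE CH xC) inE => /andP[wx /connectP[[|z p] /=]].
  by move=> _ wx_eq; rewrite wx_eq eqxx in wx.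
case/andP => xz _ _; exists [set x; z]; last exact: set21.
by case/andP: (xz) => _ xzH; rewrite inE xzH subUset !sub1set !inE connect0 connect1.
Qed.

Hypothesis H_sub : forall e, e \in H -> e \subset X.

Lemma component_sub C : C \in components X H -> C \subset X.
Proof.
have closedX : closed (adj H) X.
  move=> a b /andP[_ /H_sub]; rewrite subUset !sub1set => /andP[-> ->] //.
case/imsetP => u uX ->; apply/subsetP => y; rewrite inE => /(closed_connect closedX).
by rewrite uX => <-.
Qed.

Variable D : {set {set T}}.
Hypothesis D_pair : forall e, e \in D -> #|e| = 2.
Hypothesis D_inside : forall e, e \in D -> e \subset X -> e \in H.
Hypothesis D_covers : covers D X.

Lemma incident_components_eq C1 C2 :
  C1 \in components X H -> C2 \in components X H ->
  ~~ [disjoint incident D C1 & incident D C2] -> C1 = C2.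
Proof.
move=> C1H C2H; rewrite -setI_eq0 => /set0Pn[e]; rewrite !inE -!setI_eq0.
case/andP => /andP[eD /set0Pn[x xeC1]] /andP[_ /set0Pn[y yeC2]].
move: xeC1 yeC2; rewrite !inE => /andP[xe xC1] /andP[ye yC2].
rewrite (componentE C1H xC1) (componentE C2H yC2).
have [-> // | xy] := eqVneq x y.
have e_xy := set2_of_card2 (D_pair eD) xe ye xy.
have xyH : adj H x y.
  rewrite /adj xy -e_xy; apply: D_inside eD _.
  by rewrite e_xy subUset !sub1set (subsetP (component_sub C1H)) ?(subsetP (component_sub C2H)).
by apply/setP => w; rewrite !inE (same_connect (sym_connect_sym (adj_sym H)) (connect1 xyH)).
Qed.

Lemma component_cost_le C :
  C \in components X H ->
  (if #|C| == 1 then 1 else min_edge_cover (induced_edges H C) C) <= #|incident D C|.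
Proof.
move=> CH; have covC := coversS (component_sub CH) D_covers.
case: ifP => [/eqP C1 | C1].
  have /card_gt0P[x xC] : 0 < #|C| by rewrite C1.
  have [e eD xe] := coversP covC x xC.
  by apply/card_gt0P; exists e; exact: incidentP eD xe xC.
apply: min_edge_cover_le_incident (component_covered CH (negbT C1)) D_pair _ covC.
move=> e eD eC; rewrite inE eC andbT.
exact: D_inside eD (subset_trans eC (component_sub CH)).
Qed.

Lemma rho_le_card : rho X H <= #|D|.
Proof.
apply: leq_trans (sum_card_le_disjoint (A := incident D) _ _).
- by apply: leq_sum => C; exact: component_cost_le.
- by move=> C _; apply/subsetP => e; rewrite inE => /andP[].
- exact: incident_components_eq.
Qed.

End Components.

End Graphs.

Theorem lemma7 (T : finType) (E : {set {set T}}) (k : nat) :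
  is_graph E -> cograph E -> edge_connectivity E k ->
  forall Eca : {set {set T}},
    Eca \subset compl_edges E ->
    edge_connectivity (E :|: Eca) k.+1 ->
    rho [set v | deg E v == k] (induced_edges (compl_edges E) [set v | deg E v == k])
      <= #|Eca|.
Proof.
move=> gE _ _ Eca sEca connE'; apply: rho_le_card.
- by move=> e; rewrite inE => /andP[].
- by move=> e /(subsetP sEca); rewrite inE => /andP[/eqP].
- by move=> e eEca eX; rewrite inE (subsetP sEca _ eEca) eX.
- apply/coversP => v; rewrite inE => /eqP degv.
  by apply: augmenting_edge_at_low_degree gE connE' _; rewrite degv.
Qed.
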